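(* The relation $\{(\rho,\pi):\rho\text{ is total},\ \pi\text{ is trivial},\ |\rho|=|\pi|\}$ is $\Pi_3$-definable in $\mathbf Y^*=\langle\mathcal P,\le,[1]+[1]\rangle$.
   Context: $\mathcal P$ is the set of all integer partitions, including the empty partition $\emptyset$; a partition is a nonincreasing finite sequence of positive integers (its parts), and $|\pi|$ is the sum of its parts. A partition is total if it has exactly one part, and trivial if all its parts equal $1$; $\emptyset$ counts as both. Young's lattice $\mathbf Y=\langle\mathcal P,\le\rangle$ has $(s_1,\dots,s_r)\le(n_1,\dots,n_t)$ iff $r\le t$ and $s_i\le n_i$ for all $i\le r$; $\mathbf Y^*$ is $\mathbf Y$ with a constant symbol for the partition $(1,1)$. A relation is $\Pi_n$-definable if it is defined by a first-order formula in the language $\{\le,(1,1)\}$ in prenex form with $n$ alternating quantifier blocks, the outermost universal, and a quantifier-free matrix. *)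

From mathcomp Require Import all_boot.
Set Implicit Arguments. Unset Strict Implicit. Unset Printing Implicit Defensive.

Definition is_partition (s : seq nat) : bool :=
  sorted geq s && all (fun x => 0 < x) s.

Definition partition := {s : seq nat | is_partition s}.

Definition parts (p : partition) : seq nat := proj1_sig p.

Definition weight (p : partition) : nat := sumn (parts p).

Definition is_total (p : partition) : Prop :=
  size (parts p) <= 1.

Definition is_trivial (p : partition) : Prop :=
  all (fun x => x == 1) (parts p).

Definition yle (p q : partition) : Prop :=
  size (parts p) <= size (parts q) /\
  forall i, i < size (parts p) -> nth 0 (parts p) i <= nth 0 (parts q) i.

Lemma is_partition_11 : is_partition [:: 1; 1].
Proof. by []. Qed.
Definition p11 : partition := exist _ [:: 1; 1] is_partition_11.

Inductive term : Type :=
| TVar : nat -> term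
| TC : term.

Inductive qf : Type :=
| QLe : term -> term -> qf
| QEq : term -> term -> qf
| QNot : qf -> qf
| QAnd : qf -> qf -> qf
| QOr : qf -> qf -> qf.

Definition assign := nat -> partition.

Definition upd (e : assign) (x : nat) (p : partition) : assign :=
  fun j => if j == x then p else e j.

Definition teval (e : assign) (t : term) : partition :=
  match t with TVar i => e i | TC => p11 end.

Fixpoint qf_sat (e : assign) (f : qf) : Prop :=
  match f with
  | QLe s t => yle (teval e s) (teval e t)
  | QEq s t => teval e s = teval e t
  | QNot g => ~ qf_sat e g
  | QAnd g h => qf_sat e g /\ qf_sat e h
  | QOr g h => qf_sat e g \/ qf_sat e h
  end.

Fixpoint sat_block (univ : bool) (bl : seq nat) (k : assign -> Prop)
    (e : assign) : Prop :=
  match bl with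
  | [::] => k e
  | x :: xs =>
      if univ then forall p : partition, sat_block univ xs k (upd e x p)
      else exists p : partition, sat_block univ xs k (upd e x p)
  end.

Fixpoint sat_prenex (univ : bool) (bs : seq (seq nat)) (m : qf)
    (e : assign) : Prop :=
  match bs with
  | [::] => qf_sat e m
  | bl :: rest => sat_block univ bl (sat_prenex (~~ univ) rest m) e
  end.

Definition Pi_definable2 (n : nat) (R : partition -> partition -> Prop) : Prop :=
  exists (bs : seq (seq nat)) (m : qf),
    size bs = n /\
    forall e : assign, sat_prenex true bs m e <-> R (e 0) (e 1).

(* A partition is seen through its row-length function.  The formula says:
   (1,1) is not below rho (rho is total); every t below pi and not above (1,1)
   is below (1,1) (pi is trivial, tested with t = (2)); and for every lambda,
   either rho and pi lie on the same side of lambda, or there are rectangles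
   A, B, D, with B and D obtained from A by adding a column and a row, which
   lambda separates.  A rectangle is expressed as a partition with a greatest
   strictly smaller element, and adding a row or a column as: the interval
   [A, B] is a chain, with intermediate elements only if B has two rows and
   lies above a partition w incomparable with (1,1).

   Soundness: taking lambda a staircase, which never separates rectangles of
   equal semiperimeter, rho and pi lie below the same staircases, so they have
   the same weight.  Completeness: rho = (n) and pi = (1^n) are joined by the
   rectangles of semiperimeter n + 1, consecutive ones covering a common
   rectangle, so a lambda separating rho and pi separates such a pair. *)

From Pilot Require Import Defs.
From mathcomp Require Import all_boot zify.
From Stdlib Require Import Classical.

(* [partition] from finset would otherwise shadow the partitions of Defs. *)
Local Notation partition := Defs.partition.

Set Implicit Arguments. Unset Strict Implicit. Unset Printing Implicit Defensive.

Definition row (p : partition) (i : nat) : nat := nth 0 (parts p) i.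

Lemma partition_parts (p : partition) : is_partition (parts p).
Proof. by case: p. Qed.

Lemma row_antitone (p : partition) i j : i <= j -> row p j <= row p i.
Proof.
move=> le_ij; have /andP [sorted_p _] := partition_parts p.
case: (ltnP j (size (parts p))) => hj; last by rewrite /row (nth_default _ hj).
apply: (sorted_leq_nth (leT := geq)) => //; rewrite ?inE; try lia.
- by move=> a b c /=; lia.
- by move=> a /=; lia.
Qed.

Lemma row_default (p : partition) i : size (parts p) <= i -> row p i = 0.
Proof. exact: nth_default. Qed.

Lemma row_pos (p : partition) (i : nat) : i < size (parts p) -> 0 < row p i.
Proof.
move=> hi; have /andP [_ /allP pos_p] := partition_parts p.
exact: (pos_p _ (mem_nth 0 hi)).
Qed.

Lemma yle_rowsP p q : yle p q <-> forall i, row p i <= row q i.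
Proof.
split=> [[le_size le_rows] i | le_rows].
  by case: (ltnP i (size (parts p))) => hi; [exact: le_rows | rewrite row_default].
split=> [|i _]; last exact: le_rows.
case: (leqP (size (parts p)) (size (parts q))) => // lt_qp.
have := le_rows (size (parts q)); rewrite (@row_default q) //.
by have := row_pos lt_qp; lia.
Qed.

Lemma partition_ext (p q : partition) : (forall i, row p i = row q i) -> p = q.
Proof.
move=> eq_rows; apply: val_inj => /=.
have eq_size : size (parts p) = size (parts q).
  case: (ltngtP (size (parts p)) (size (parts q))) => // lt_size.
  - by have := row_pos lt_size; rewrite -eq_rows row_default //; lia.
  - by have := row_pos lt_size; rewrite eq_rows row_default //; lia.
by apply: (eq_from_nth (x0 := 0) eq_size) => i _; exact: eq_rows.
Qed.

Lemma yle_antisym p q : yle p q -> yle q p -> p = q.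
Proof.
move=> /yle_rowsP le_pq /yle_rowsP le_qp; apply: partition_ext => i.
by have := le_pq i; have := le_qp i; lia.
Qed.

Lemma row_neq p q i : row p i <> row q i -> p <> q.
Proof. by move=> neq_row eq_pq; apply: neq_row; rewrite eq_pq. Qed.

Definition ylt (p q : partition) : Prop := yle p q /\ p <> q.

Lemma exists_corner (p : partition) i : row p i < row p 0 ->
  exists j, j < i /\ row p j.+1 < row p j.
Proof.
elim: i => [|i IH] lt_i0; first lia.
case: (ltnP (row p i) (row p 0)) => hi.
  by have [j [lt_ji corner]] := IH hi; exists j; split => //; lia.
by exists i; split => //; have := @row_antitone p 0 i ltac:(lia); lia.
Qed.

Ltac case_lia :=
  rewrite /=; repeat (let H := fresh in case: ifP => H; try (move/eqP: H => H; subst)); lia.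

Definition empty_partition : partition := exist _ [::] (erefl true).

Definition antitone (g : nat -> nat) : Prop := forall i j, i <= j -> g j <= g i.

Definition of_fun_seq (g : nat -> nat) (N : nat) : seq nat :=
  map g (iota 0 (find (fun i => g i == 0) (iota 0 N))).

Definition of_fun (g : nat -> nat) (N : nat) : partition :=
  odflt empty_partition (insub (of_fun_seq g N)).

Lemma of_fun_seq_partition g N : antitone g -> is_partition (of_fun_seq g N).
Proof.
move=> anti_g; have find_le : find (fun i => g i == 0) (iota 0 N) <= N.
  by rewrite -[X in _ <= X](size_iota 0 N) find_size.
apply/andP; split.
  apply/(sortedP 0) => i; rewrite size_map size_iota => hi.
  rewrite !(nth_map 0) ?size_iota; try lia.
  by rewrite !nth_iota; try lia; apply: anti_g; lia.
apply/allP => x /mapP [i]; rewrite mem_iota => /andP [_ hi] ->.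
have := before_find 0 (s := iota 0 N) (a := fun i => g i == 0) hi.
by rewrite nth_iota /=; [rewrite add0n lt0n => -> | lia].
Qed.

Lemma of_fun_row g N : antitone g -> g N = 0 -> forall i, row (of_fun g N) i = g i.
Proof.
move=> anti_g gN i.
rewrite /row /of_fun insubT ?of_fun_seq_partition //= /of_fun_seq.
set K := find _ _.
have le_KN : K <= N by rewrite /K -[X in _ <= X](size_iota 0 N) find_size.
case: (ltnP i K) => hi; first by rewrite (nth_map 0) ?size_iota // nth_iota.
rewrite nth_default ?size_map ?size_iota //.
case: (ltnP K N) => hKN; last by have := anti_g N i; lia.
have := nth_find 0 (s := iota 0 N) (a := fun i => g i == 0).
rewrite has_find size_iota -/K => /(_ hKN).
by rewrite nth_iota // add0n => /eqP gK; have := anti_g _ _ hi; lia.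
Qed.

Definition rect (c r : nat) : partition := of_fun (fun i => if i < r then c else 0) r.

Lemma rect_row c r i : row (rect c r) i = if i < r then c else 0.
Proof. by apply: of_fun_row; [move=> a b hab; case_lia | rewrite ltnn]. Qed.

Definition stair (k : nat) : partition := of_fun (fun i => k - i) k.

Lemma stair_row k i : row (stair k) i = k - i.
Proof. by apply: of_fun_row; [move=> a b hab | ]; lia. Qed.

Ltac rows_simpl :=
  rewrite ?rect_row ?stair_row;
  repeat (rewrite of_fun_row; [| by move=> ? ? ? /=; case_lia | by case_lia]);
  rewrite /=.

Lemma p11_rect : p11 = rect 1 2.
Proof. by apply: partition_ext => -[|[|i]]; rewrite rect_row /row //= nth_nil. Qed.

Lemma rect_le c r c' r' : 0 < c -> 0 < r ->
  yle (rect c r) (rect c' r') <-> c <= c' /\ r <= r'.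
Proof.
move=> hc hr; rewrite yle_rowsP; split.
  by move=> le_rows; have := le_rows 0; have := le_rows r.-1; rows_simpl; case_lia.
by move=> [le_c le_r] i; rows_simpl; case_lia.
Qed.

Lemma rect_inj c r c' r' : 0 < c -> 0 < r -> rect c r = rect c' r' -> c = c' /\ r = r'.
Proof.
move=> hc hr eq_rect.
have /rect_le [//|//|le_c le_r] : yle (rect c r) (rect c' r') by rewrite eq_rect; apply/yle_rowsP.
have [hc' hr'] : 0 < c' /\ 0 < r' by lia.
have /rect_le [//|//|le_c' le_r'] : yle (rect c' r') (rect c r) by rewrite eq_rect; apply/yle_rowsP.
lia.
Qed.

Lemma rect_le_stair c r k :
  yle (rect c r) (stair k) <-> (c == 0) || (r == 0) || (c + r <= k.+1).
Proof.
rewrite yle_rowsP; split; last by move=> h i; rows_simpl; case_lia.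
by case: (posnP r) => [-> | hr] /(_ r.-1); rows_simpl; case_lia.
Qed.

Lemma p11_le p : yle p11 p <-> 0 < row p 1.
Proof.
rewrite p11_rect yle_rowsP; split; first by move/(_ 1); rows_simpl.
move=> h i; rows_simpl; case: ifP => hi //.
by have := @row_antitone p i 1 ltac:(lia); lia.
Qed.

Lemma total_p11 p : is_total p <-> ~ yle p11 p.
Proof.
rewrite p11_le /is_total; split=> [|h].
  by move=> tot; rewrite row_default.
by case: leqP => // lt_1; have := row_pos lt_1; lia.
Qed.

Lemma trivial_row0 p : is_trivial p <-> row p 0 <= 1.
Proof.
rewrite /is_trivial; split.
  case: (ltnP 0 (size (parts p))) => h; last by rewrite row_default.
  by move/allP/(_ _ (mem_nth 0 h))/eqP; rewrite /row => ->.
move=> h; apply/allP => x /(nthP 0) [i hi <-].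
have one : row p i = 1 by have := row_pos hi; have := @row_antitone p 0 i ltac:(lia); lia.
by move: one; rewrite /row => ->.
Qed.

Lemma yle_trivial p q : yle p q -> is_trivial q -> is_trivial p.
Proof. by move=> /yle_rowsP le_pq; rewrite !trivial_row0; have := le_pq 0; lia. Qed.

Lemma trivial_below_p11 p : is_trivial p -> ~ yle p11 p -> yle p p11.
Proof.
rewrite trivial_row0 p11_le p11_rect yle_rowsP => h0 h1 i; rows_simpl.
by have := @row_antitone p 1 i; have := @row_antitone p 0 i; case_lia.
Qed.

Lemma total_rect p : is_total p -> p = rect (weight p) 1.
Proof.
move=> tot; have w0 : weight p = row p 0.
  by move: tot; rewrite /is_total /weight /row; case: (parts p) => [|a [|b s]] //= _; lia.
have /total_p11/p11_le r1 := tot.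
apply: partition_ext => -[|i]; rows_simpl => //.
by have := @row_antitone p 1 i.+1; lia.
Qed.

Lemma trivial_rect p : is_trivial p -> p = rect 1 (weight p).
Proof.
move=> triv; have w_size : weight p = size (parts p).
  rewrite /weight; have /all_pred1P -> : all (pred1 1) (parts p) by [].
  by rewrite sumn_nseq size_nseq mul1n.
move/trivial_row0: triv => r0; apply: partition_ext => i; rewrite rect_row w_size.
case: ltnP => hi; last by rewrite row_default.
by have := row_pos hi; have := @row_antitone p 0 i ltac:(lia); lia.
Qed.

Definition part2 : partition := rect 2 1.

Lemma part2_p11_incomparable : ~ yle p11 part2 /\ ~ yle part2 p11.
Proof. by rewrite /part2 p11_rect !rect_le //; lia. Qed.

Definition remove_cell (p : partition) (k : nat) : partition :=
  of_fun (fun i => if i == k then (row p i).-1 else row p i) (size (parts p)).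

Lemma remove_cell_row p k : row p k.+1 < row p k ->
  forall i, row (remove_cell p k) i = if i == k then (row p i).-1 else row p i.
Proof.
move=> corner; apply: of_fun_row; last by rewrite row_default //; case: ifP.
move=> a b le_ab /=; have := @row_antitone p a b le_ab.
case: (ltnP k b) => hkb; last by case_lia.
by have := @row_antitone p k.+1 b hkb; case_lia.
Qed.

Lemma remove_cell_lt p k : row p k.+1 < row p k -> ylt (remove_cell p k) p.
Proof.
move=> corner; split.
  by apply/yle_rowsP => i; rewrite remove_cell_row //; case_lia.
by apply: (@row_neq _ _ k); rewrite remove_cell_row // eqxx; lia.
Qed.

(* A partition with a greatest element strictly below it is a nonempty
   rectangle: a corner besides the last row would give a second, incomparable
   partition covered by it. *)
Lemma greatest_below_rect p u : ylt u p -> (forall v, ylt v p -> yle v u) ->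
  exists c r, [/\ 0 < c, 0 < r & p = rect c r].
Proof.
move=> [le_up neq_up] below_u; set r := size (parts p).
have hr : 0 < r.
  rewrite lt0n; apply/negP => /eqP r0; apply: neq_up; apply: yle_antisym => //.
  by apply/yle_rowsP => i; rewrite (@row_default p) //; lia.
have last_corner : row p r.-1.+1 < row p r.-1.
  by rewrite prednK // row_default // row_pos //; lia.
have flat i : i < r -> row p i = row p 0.
  move=> hi; apply: NNPP => neq_i0.
  have [j [lt_ji corner_j]] : exists j, j < i /\ row p j.+1 < row p j.
    by apply: exists_corner; have := @row_antitone p 0 i ltac:(lia); lia.
  apply: neq_up; apply: yle_antisym => //; apply/yle_rowsP => k.
  have /yle_rowsP/(_ k) := below_u _ (remove_cell_lt corner_j).
  have /yle_rowsP/(_ k) := below_u _ (remove_cell_lt last_corner).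
  by rewrite !remove_cell_row //; case_lia.
exists (row p 0), r; split => //; first exact: row_pos.
apply: partition_ext => i; rewrite rect_row; case: ltnP => hi; first exact: flat.
exact: row_default.
Qed.

Definition rect_minus_cell (c r : nat) : partition :=
  of_fun (fun i => if i < r.-1 then c else if i < r then c.-1 else 0) r.

Lemma rect_greatest_below c r : 0 < c -> 0 < r ->
  ylt (rect_minus_cell c r) (rect c r) /\
  forall v, ylt v (rect c r) -> yle v (rect_minus_cell c r).
Proof.
move=> hc hr; split.
  split; first by apply/yle_rowsP => i; rows_simpl; case_lia.
  by apply: (@row_neq _ _ r.-1); rows_simpl; case_lia.
move=> v [/yle_rowsP le_v neq_v].
have short_last : row v r.-1 < c.
  apply: NNPP => long_last; apply: neq_v; apply: partition_ext => i.
  have := le_v i; rewrite !rect_row; case: ifP => hi le_vi; last lia.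
  by have := @row_antitone v i r.-1 ltac:(lia); lia.
apply/yle_rowsP => i; have := le_v i; rows_simpl.
by have := @row_antitone v r.-1 i; case_lia.
Qed.

Lemma rect_lt c r c' r' : 0 < c -> 0 < r -> c <= c' -> r <= r' -> c < c' \/ r < r' ->
  ylt (rect c r) (rect c' r').
Proof.
move=> hc hr le_c le_r lt_cr; split; first by apply/rect_le.
by move=> /rect_inj [//|//|ec er]; lia.
Qed.

(* The intervals [A, B] of Young's lattice between rectangles which encode
   that B adds a row or a column to A. *)
Definition interval_chain (A B : partition) : Prop :=
  forall x y, yle A x -> yle x B -> yle A y -> yle y B -> yle x y \/ yle y x.

Definition between_condition (A B w : partition) : Prop :=
  forall z, ylt A z -> ylt z B ->
    yle p11 B /\ (yle w B /\ (~ yle p11 w /\ ~ yle w p11)).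

Lemma interval_one_row_chain A B k :
  (forall i, i != k -> row B i = row A i) -> interval_chain A B.
Proof.
move=> same_rows x y /yle_rowsP Ax /yle_rowsP xB /yle_rowsP Ay /yle_rowsP yB.
have same i : i != k -> row x i = row y i.
  by move=> hi; have := same_rows i hi; have := Ax i; have := xB i; have := Ay i; have := yB i; lia.
case: (leqP (row x k) (row y k)) => hk; [left | right]; apply/yle_rowsP => i;
  by case: (eqVneq i k) => [-> | /same ->]; lia.
Qed.

Lemma one_cell_interval A B k z :
  (forall i, i != k -> row B i = row A i) -> row B k = (row A k).+1 ->
  ylt A z -> ylt z B -> False.
Proof.
move=> same_rows row_k [/yle_rowsP Az neq_Az] [/yle_rowsP zB neq_zB].
have same i : i != k -> row z i = row A i.
  by move=> hi; have := same_rows i hi; have := Az i; have := zB i; lia.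
have := Az k; have := zB k; rewrite row_k => le_k ge_k.
case: (ltnP (row A k) (row z k)) => hk; [apply: neq_zB | apply: neq_Az];
  apply: partition_ext => i; case: (eqVneq i k) => [-> | hik]; try lia.
all: by rewrite same // ?same_rows.
Qed.

(* Rectangles that grow in both directions, or by two in one direction,
   leave two incomparable partitions in between. *)
Lemma rect_corner_not_chain c r c' r' : 0 < c -> 0 < r -> c < c' -> r < r' ->
  ~ interval_chain (rect c r) (rect c' r').
Proof.
move=> hc hr lt_c lt_r chain.
have := chain (of_fun (fun i => if i == 0 then c.+1 else if i < r then c else 0) r.+1)
              (of_fun (fun i => if i < r then c else if i == r then 1 else 0) r.+1).
rewrite !yle_rowsP; case.
- by move=> i; rows_simpl; case_lia.
- by move=> i; rows_simpl; case_lia.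
- by move=> i; rows_simpl; case_lia.
- by move=> i; rows_simpl; case_lia.
- by move/(_ 0); rows_simpl; case_lia.
- by move/(_ r); rows_simpl; case_lia.
Qed.

Lemma rect_wide_not_chain c r c' r' : 0 < c -> 1 < r -> c.+1 < c' -> r <= r' ->
  ~ interval_chain (rect c r) (rect c' r').
Proof.
move=> hc hr lt_c le_r chain.
have := chain (of_fun (fun i => if i == 0 then c.+2 else if i < r then c else 0) r.+1)
              (of_fun (fun i => if i < 2 then c.+1 else if i < r then c else 0) r.+1).
rewrite !yle_rowsP; case.
- by move=> i; rows_simpl; case_lia.
- by move=> i; rows_simpl; case_lia.
- by move=> i; rows_simpl; case_lia.
- by move=> i; rows_simpl; case_lia.
- by move/(_ 0); rows_simpl; case_lia.
- by move/(_ 1); rows_simpl; case_lia.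
Qed.

Lemma rect_tall_not_chain c r c' r' : 1 < c -> 0 < r -> c <= c' -> r.+1 < r' ->
  ~ interval_chain (rect c r) (rect c' r').
Proof.
move=> hc hr le_c lt_r chain.
have := chain
  (of_fun (fun i => if i < r then c else if i == r then 1 else if i == r.+1 then 1 else 0) r.+2)
  (of_fun (fun i => if i < r then c else if i == r then 2 else 0) r.+2).
rewrite !yle_rowsP; case.
- by move=> i; rows_simpl; case_lia.
- by move=> i; rows_simpl; case_lia.
- by move=> i; rows_simpl; case_lia.
- by move=> i; rows_simpl; case_lia.
- by move/(_ r.+1); rows_simpl; case_lia.
- by move/(_ r); rows_simpl; case_lia.
Qed.

Lemma rect_cover_semiperimeter c r c' r' w : 0 < c -> 0 < r ->
  ylt (rect c r) (rect c' r') -> interval_chain (rect c r) (rect c' r') ->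
  between_condition (rect c r) (rect c' r') w -> c' + r' = c + r + 1.
Proof.
move=> hc hr [le_AB neq_AB] chain between.
have [le_c le_r] := (rect_le _ _ hc hr).1 le_AB.
have lt_sum : c + r < c' + r'.
  case: (ltnP (c + r) (c' + r')) => // ge_sum; case: neq_AB.
  by have [-> ->] : c' = c /\ r' = r by lia.
have one_dir : c' = c \/ r' = r.
  by apply: NNPP => h; apply: (rect_corner_not_chain hc hr _ _ chain); lia.
case: (leqP (c' + r') (c + r).+1) => [|long]; first lia.
exfalso; case: one_dir => [ec | er]; [subst c' | subst r'].
- case: (ltnP 1 c) => hc2; first by apply: (rect_tall_not_chain hc2 hr _ _ chain); lia.
  have c1 : c = 1 by lia.
  subst c; have [_ [le_wB [not_Cw not_wC]]] := between (rect 1 r.+1)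
    (@rect_lt 1 r 1 r.+1 hc hr (leqnn 1) (leqnSn r) (or_intror (ltnSn r)))
    (@rect_lt 1 r.+1 1 r' hc (ltn0Sn r) (leqnn 1) ltac:(lia) ltac:(lia)).
  apply: not_wC; apply: trivial_below_p11 (yle_trivial le_wB _) not_Cw.
  by rewrite trivial_row0 rect_row; case_lia.
- case: (ltnP 1 r) => hr2; first by apply: (rect_wide_not_chain hc hr2 _ _ chain); lia.
  have r1 : r = 1 by lia.
  subst r; have [le_CB _] := between (rect c.+1 1)
    (@rect_lt c 1 c.+1 1 hc hr (leqnSn c) (leqnn 1) (or_introl (ltnSn c)))
    (@rect_lt c.+1 1 c' 1 (ltn0Sn c) hr ltac:(lia) (leqnn 1) ltac:(lia)).
  by move: le_CB; rewrite p11_rect rect_le //; lia.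
Qed.

Lemma rect_add_column_cover c r : 0 < c -> 0 < r ->
  interval_chain (rect c r) (rect c.+1 r) /\
  between_condition (rect c r) (rect c.+1 r) part2.
Proof.
move=> hc hr; split.
  move=> x y /yle_rowsP Ax /yle_rowsP xB /yle_rowsP Ay /yle_rowsP yB.
  case: (classic (yle x y)) => [|not_xy]; [by left | right].
  have [i lt_i] : exists i, row y i < row x i.
    apply: NNPP => h; apply: not_xy; apply/yle_rowsP => i.
    by case: (leqP (row x i) (row y i)) => // lt; case: h; exists i.
  apply/yle_rowsP => j; have := Ax i; have := xB i; have := Ay i; have := yB i.
  have := Ax j; have := xB j; have := Ay j; have := yB j; rewrite !rect_row.
  case: (leqP j i) => hji.
    by have := @row_antitone y j i hji; have := @row_antitone x j i hji; case_lia.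
  by have := @row_antitone y i j ltac:(lia); have := @row_antitone x i j ltac:(lia); case_lia.
move=> z lt_Az lt_zB; case: (ltnP 1 r) => hr2.
  by rewrite p11_rect /part2 !rect_le //; have := part2_p11_incomparable; lia.
exfalso; apply: (@one_cell_interval _ _ 0 z _ _ lt_Az lt_zB) => [i|];
  by rewrite !rect_row; case_lia.
Qed.

Lemma rect_add_row_cover c r : 0 < c -> 0 < r ->
  interval_chain (rect c r) (rect c r.+1) /\
  between_condition (rect c r) (rect c r.+1) part2.
Proof.
move=> hc hr; split.
  by apply: (@interval_one_row_chain _ _ r) => i; rewrite !rect_row; case_lia.
move=> z lt_Az lt_zB; case: (ltnP 1 c) => hc2.
  by rewrite p11_rect /part2 !rect_le //; have := part2_p11_incomparable; lia.
exfalso; apply: (@one_cell_interval _ _ r z _ _ lt_Az lt_zB) => [i|];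
  by rewrite !rect_row; case_lia.
Qed.

(* Variables: 0 = rho, 1 = pi, 2 = lambda;
   3, 4, 5 = rectangles A, B, D; 6, 7, 8 = their greatest lower elements;
   9, 10 = the witnesses w of the two covers; 11, 12, 13 = probes v of the
   lower elements; 14..16 and 17..19 = probes x, y, z of the two covers;
   20 = the probe t for triviality of pi. *)
Definition Le (a b : nat) : qf := QLe (TVar a) (TVar b).
Definition Eqq (a b : nat) : qf := QEq (TVar a) (TVar b).
Definition Imp (p q : qf) : qf := QOr (QNot p) q.
Definition Iff (p q : qf) : qf := QAnd (Imp p q) (Imp q p).
Definition Lt (a b : nat) : qf := QAnd (Le a b) (QNot (Eqq a b)).
Definition LeC (a : nat) : qf := QLe TC (TVar a).
Definition CLe (a : nat) : qf := QLe (TVar a) TC.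

(* a is a rectangle whose greatest strictly smaller element is u *)
Definition RectQ (a u v : nat) : qf := QAnd (Lt u a) (Imp (Lt v a) (Le v u)).
(* b adds a row or a column to the rectangle a *)
Definition CovQ (a b w x y z : nat) : qf :=
  QAnd (Lt a b)
   (QAnd (Imp (QAnd (QAnd (Le a x) (Le x b)) (QAnd (Le a y) (Le y b))) (QOr (Le x y) (Le y x)))
         (Imp (QAnd (Lt a z) (Lt z b))
              (QAnd (LeC b) (QAnd (Le w b) (QAnd (QNot (LeC w)) (QNot (CLe w))))))).
(* lambda separates the two rectangles covering the rectangle A *)
Definition SepQ : qf :=
  QAnd (RectQ 3 6 11) (QAnd (RectQ 4 7 12) (QAnd (RectQ 5 8 13)
   (QAnd (CovQ 3 4 9 14 15 16) (QAnd (CovQ 3 5 10 17 18 19) (QNot (Iff (Le 4 2) (Le 5 2))))))).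
Definition matrix : qf :=
  QAnd (QNot (LeC 0)) (QAnd (Imp (QAnd (Le 20 1) (QNot (LeC 20))) (CLe 20))
     (QOr SepQ (Iff (Le 0 2) (Le 1 2)))).
Definition blocks : seq (seq nat) :=
  [:: [:: 2]; [:: 3; 4; 5; 6; 7; 8; 9; 10];
      [:: 11; 12; 13; 14; 15; 16; 17; 18; 19; 20]].

Definition qimp (P Q : Prop) : Prop := ~ P \/ Q.
Definition qiff (P Q : Prop) : Prop := qimp P Q /\ qimp Q P.

Lemma qimpE (P Q : Prop) : qimp P Q <-> (P -> Q).
Proof. by rewrite /qimp; case: (classic P); tauto. Qed.

Lemma qiffE (P Q : Prop) : qiff P Q <-> (P <-> Q).
Proof. by rewrite /qiff !qimpE. Qed.

Definition RectP (A u v : partition) : Prop := ylt u A /\ qimp (ylt v A) (yle v u).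
Definition CovP (A B w x y z : partition) : Prop :=
  ylt A B /\ (qimp ((yle A x /\ yle x B) /\ (yle A y /\ yle y B)) (yle x y \/ yle y x) /\
   qimp (ylt A z /\ ylt z B) (yle p11 B /\ (yle w B /\ (~ yle p11 w /\ ~ yle w p11)))).
Definition SepP (lam A B D uA uB uD w1 w2 vA vB vD x1 y1 z1 x2 y2 z2 : partition)
  : Prop :=
  RectP A uA vA /\ (RectP B uB vB /\ (RectP D uD vD /\ (CovP A B w1 x1 y1 z1 /\
   (CovP A D w2 x2 y2 z2 /\ ~ qiff (yle B lam) (yle D lam))))).
Definition MatrixP
  (rho pi lam A B D uA uB uD w1 w2 vA vB vD x1 y1 z1 x2 y2 z2 t : partition) : Prop :=
  ~ yle p11 rho /\ (qimp (yle t pi /\ ~ yle p11 t) (yle t p11) /\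
   (SepP lam A B D uA uB uD w1 w2 vA vB vD x1 y1 z1 x2 y2 z2 \/
    qiff (yle rho lam) (yle pi lam))).
Definition FormulaP (rho pi : partition) : Prop := forall lam, exists A B D uA uB uD w1 w2,
  forall vA vB vD x1 y1 z1 x2 y2 z2 t,
   MatrixP rho pi lam A B D uA uB uD w1 w2 vA vB vD x1 y1 z1 x2 y2 z2 t.

Lemma formula_sem e : sat_prenex true blocks matrix e <-> FormulaP (e 0) (e 1).
Proof. by []. Qed.

Lemma RectP_all A u :
  (forall v, RectP A u v) <-> ylt u A /\ forall v, ylt v A -> yle v u.
Proof.
split=> [all_v | [lt_uA below_u] v]; last by split => //; apply/qimpE/below_u.
by split=> [|v]; [case: (all_v u) | apply/qimpE; case: (all_v v)].
Qed.

Lemma CovP_all A B w : (forall x y z, CovP A B w x y z) <->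
  [/\ ylt A B, interval_chain A B & between_condition A B w].
Proof.
split=> [all_xyz | [lt_AB chain between] x y z].
  split; first by case: (all_xyz A A A).
  - move=> x y Ax xB Ay yB; have [_ [/qimpE imp _]] := all_xyz x y A; exact: imp.
  - move=> z Az zB; have [_ [_ /qimpE imp]] := all_xyz A A z; exact: imp.
split => //; split; apply/qimpE.
  by move=> [[Ax xB] [Ay yB]]; apply: chain.
by move=> [Az zB]; exact: between Az zB.
Qed.

Lemma SepP_decode lam A B D uA uB uD w1 w2 :
  (forall vA vB vD x1 y1 z1 x2 y2 z2,
     SepP lam A B D uA uB uD w1 w2 vA vB vD x1 y1 z1 x2 y2 z2) ->
  exists c r c' r', [/\ 0 < c, 0 < r, 0 < c', 0 < r' & c + r = c' + r'] /\
    ~ (yle (rect c r) lam <-> yle (rect c' r') lam).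
Proof.
pose e := empty_partition => all_probes.
have rect_of X u : (forall v, RectP X u v) -> exists c r, [/\ 0 < c, 0 < r & X = rect c r].
  by move/RectP_all => [lt_uX below]; exact: greatest_below_rect lt_uX below.
have [cA [rA [hcA hrA eA]]] : exists c r, [/\ 0 < c, 0 < r & A = rect c r].
  by apply: (rect_of _ uA) => v; case: (all_probes v e e e e e e e e).
have [cB [rB [hcB hrB eB]]] : exists c r, [/\ 0 < c, 0 < r & B = rect c r].
  by apply: (rect_of _ uB) => v; case: (all_probes e v e e e e e e e) => _ [].
have [cD [rD [hcD hrD eD]]] : exists c r, [/\ 0 < c, 0 < r & D = rect c r].
  by apply: (rect_of _ uD) => v; case: (all_probes e e v e e e e e e) => _ [_ []].
subst A B D.
have [_ [_ [_ [_ [_ sep]]]]] := all_probes e e e e e e e e e.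
have /CovP_all [ltB chainB betweenB] : forall x y z, CovP (rect cA rA) (rect cB rB) w1 x y z.
  by move=> x y z; case: (all_probes e e e x y z e e e) => _ [_ [_ []]].
have /CovP_all [ltD chainD betweenD] : forall x y z, CovP (rect cA rA) (rect cD rD) w2 x y z.
  by move=> x y z; case: (all_probes e e e e e e x y z) => _ [_ [_ [_ []]]].
exists cB, rB, cD, rD; split; last by move=> sep_iff; apply: sep; apply/qiffE.
split => //.
by rewrite (rect_cover_semiperimeter hcA hrA ltB chainB betweenB)
           (rect_cover_semiperimeter hcA hrA ltD chainD betweenD).
Qed.

Lemma SepP_witness lam c r : 0 < c -> 0 < r ->
  ~ (yle (rect c.+1 r) lam <-> yle (rect c r.+1) lam) ->
  forall vA vB vD x1 y1 z1 x2 y2 z2,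
    SepP lam (rect c r) (rect c.+1 r) (rect c r.+1)
      (rect_minus_cell c r) (rect_minus_cell c.+1 r) (rect_minus_cell c r.+1)
      part2 part2 vA vB vD x1 y1 z1 x2 y2 z2.
Proof.
move=> hc hr sep vA vB vD x1 y1 z1 x2 y2 z2.
have rectP c' r' v : 0 < c' -> 0 < r' -> RectP (rect c' r') (rect_minus_cell c' r') v.
  by move=> hc' hr'; move: v; apply/RectP_all; exact: rect_greatest_below.
have [chainB betweenB] := rect_add_column_cover hc hr.
have [chainD betweenD] := rect_add_row_cover hc hr.
do 3 (split; first by apply: rectP; lia).
split; first by move: x1 y1 z1; apply/CovP_all; split => //; apply: rect_lt; lia.
split; first by move: x2 y2 z2; apply/CovP_all; split => //; apply: rect_lt; lia.
by move/qiffE.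
Qed.

Lemma iff_chain (Q : nat -> Prop) m :
  (forall k, k < m -> (Q k <-> Q k.+1)) -> (Q 0 <-> Q m).
Proof.
elim: m => [|m IH] step //.
have IH' : Q 0 <-> Q m by apply: IH => k hk; apply: step; lia.
by rewrite IH'; apply: step.
Qed.

(* Walking from the row (n) to the column (1^n) through the rectangles of
   semiperimeter n + 1: if lambda separates the ends, it separates two
   consecutive rectangles, which both cover a common rectangle. *)
Lemma separating_step lam n : ~ (yle (rect n 1) lam <-> yle (rect 1 n) lam) ->
  exists c r, [/\ 0 < c, 0 < r & ~ (yle (rect c.+1 r) lam <-> yle (rect c r.+1) lam)].
Proof.
move=> sep; have hn : 0 < n.
  case: (posnP n) => // n0; subst n; case: sep.
  by have -> : rect 0 1 = rect 1 0 by apply: partition_ext => i; rewrite !rect_row; case_lia.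
apply: NNPP => no_step; apply: sep.
have := @iff_chain (fun k => yle (rect (n - k) k.+1) lam) n.-1.
have e1 : n - n.-1 = 1 by lia.
have e2 : n.-1.+1 = n by lia.
rewrite /= subn0 e1 e2; apply => k hk.
apply: NNPP => step; apply: no_step; exists (n - k.+1), k.+1.
have -> : (n - k.+1).+1 = n - k by lia.
by split => //; lia.
Qed.

(* Soundness: from the formula, lambda = stair k shows that rho and pi lie
   below the same staircases, which forces equal weights. *)
Lemma formula_stairs rho pi : FormulaP rho pi ->
  forall k, yle rho (stair k) <-> yle pi (stair k).
Proof.
move=> sem k; have [A [B [D [uA [uB [uD [w1 [w2 matrix_holds]]]]]]]] := sem (stair k).
apply/qiffE; apply: NNPP => not_iff.
have [c [r [c' [r' [[hc hr hc' hr' same] sep]]]]] :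
    exists c r c' r', [/\ 0 < c, 0 < r, 0 < c', 0 < r' & c + r = c' + r'] /\
      ~ (yle (rect c r) (stair k) <-> yle (rect c' r') (stair k)).
  apply: (@SepP_decode _ A B D uA uB uD w1 w2) => vA vB vD x1 y1 z1 x2 y2 z2.
  by case: (matrix_holds vA vB vD x1 y1 z1 x2 y2 z2 empty_partition) => _ [_ [sep | /not_iff []]].
by apply: sep; rewrite !rect_le_stair; split => h; lia.
Qed.

Lemma formula_sound rho pi : FormulaP rho pi ->
  is_total rho /\ is_trivial pi /\ weight rho = weight pi.
Proof.
move=> sem; pose e := empty_partition.
have [A [B [D [uA [uB [uD [w1 [w2 matrix_holds]]]]]]]] := sem rho.
have tot : is_total rho by apply/total_p11; case: (matrix_holds e e e e e e e e e e).
have triv : is_trivial pi.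
  apply/trivial_row0; apply: NNPP => wide.
  have [_ [/qimpE part2_small _]] := matrix_holds e e e e e e e e e part2.
  have [not_C_part2 not_part2_C] := part2_p11_incomparable.
  apply: not_part2_C; apply: part2_small; split; last exact: not_C_part2.
  by apply/yle_rowsP => -[|i]; rewrite /part2 rect_row; case_lia.
split => //; split => //.
move: (total_rect tot) (trivial_rect triv) (formula_stairs sem).
move: (weight rho) (weight pi) => n m -> -> stairs.
have [to_pi _] := stairs n; have [_ to_rho] := stairs m.
move: to_pi to_rho; rewrite !rect_le_stair => to_pi to_rho.
by have := to_pi ltac:(lia); have := to_rho ltac:(lia); lia.
Qed.

Lemma formula_complete rho pi : is_total rho -> is_trivial pi ->
  weight rho = weight pi -> FormulaP rho pi.
Proof.
move=> tot triv eq_w lam; pose e := empty_partition.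
have not_C_rho : ~ yle p11 rho by apply/total_p11.
have pi_probe t : qimp (yle t pi /\ ~ yle p11 t) (yle t p11).
  apply/qimpE => -[le_t not_Ct]; apply: trivial_below_p11 => //.
  exact: yle_trivial le_t triv.
case: (classic (yle rho lam <-> yle pi lam)) => [same | sep].
  by exists e, e, e, e, e, e, e, e => *; split=> //; split=> //; right; apply/qiffE.
rewrite (total_rect tot) (trivial_rect triv) -eq_w in sep.
have [c [r [hc hr sep_cr]]] := separating_step sep.
exists (rect c r), (rect c.+1 r), (rect c r.+1), (rect_minus_cell c r),
  (rect_minus_cell c.+1 r), (rect_minus_cell c r.+1), part2, part2.
by move=> *; split=> //; split=> //; left; apply: SepP_witness.
Qed.

Theorem lemma3p9 :
  Pi_definable2 3
    (fun rho pi => is_total rho /\ is_trivial pi /\ weight rho = weight pi).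
Proof.
exists blocks, matrix; split => // e; rewrite formula_sem; split.
  exact: formula_sound.
by move=> [tot [triv eq_w]]; exact: formula_complete.
Qed.
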